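(* Let $\{X_\alpha:\alpha\in\mathscr A\}$ be a family of Banach spaces and $\kappa$ an infinite cardinal. Consider the condition (P): for every $\varepsilon>0$ there exists $\beta\in\mathscr A$ such that for every set $A\subset S_{X_\beta}$ with $|A|<\kappa$ there is $y\in S_{X_\beta}$ satisfying $\|x+y\|\le 1+\varepsilon$ for all $x\in A$. If (P) holds, then $\ell_\infty(\mathscr A,X_\alpha)$ is $\mathrm{ASQ}_{<\kappa}$. Moreover, if $|\mathscr A|<\mathrm{cf}(\kappa)$ and $\lambda^{|\mathscr A|}<\kappa$ for every cardinal $\lambda<\kappa$, then conversely, $\ell_\infty(\mathscr A,X_\alpha)$ being $\mathrm{ASQ}_{<\kappa}$ implies (P).
   Context: $\ell_\infty(\mathscr A,X_\alpha)$ is the Banach space of functions $x$ on $\mathscr A$ with $x(\alpha)\in X_\alpha$ and $\|x\|_\infty=\sup_\alpha\|x(\alpha)\|<\infty$. A Banach space $Z$ is $\mathrm{ASQ}_{<\kappa}$ if for every set $A\subset S_Z$ with $|A|<\kappa$ and every $\varepsilon>0$ there exists $y\in S_Z$ with $\|x\pm y\|\le 1+\varepsilon$ for all $x\in A$. $\mathrm{cf}$ denotes cofinality. *)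

From HB Require Import structures.
From mathcomp Require Import all_boot all_order all_algebra.
From mathcomp Require Import all_classical all_reals all_analysis.
Set Implicit Arguments. Unset Strict Implicit. Unset Printing Implicit Defensive.
Import Order.TTheory GRing.Theory Num.Theory.
Import numFieldNormedType.Exports.
Local Open Scope classical_set_scope.
Local Open Scope ring_scope.

Definition card_le (T U : Type) : Prop := exists f : T -> U, injective f.
Definition card_lt (T U : Type) : Prop := card_le T U /\ ~ card_le U T.

(* The infinite cardinal kappa is represented as the cardinality of a type K. *)
Definition infinite_type (K : Type) : Prop := ~ finite_set [set: K].

(* Rel is a strict well-order on K whose order type is the initial ordinal
   of |K| (every proper initial segment has cardinality < |K|). *)
Definition initial_wellorder (K : Type) (Rel : K -> K -> Prop) : Prop :=
  [/\ (forall k, ~ Rel k k),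
      (forall i j k, Rel i j -> Rel j k -> Rel i k),
      (forall i j, [\/ Rel i j, i = j | Rel j i]),
      well_founded Rel
    & (forall k, card_lt {j : K | Rel j k} K)].

(* |I| < cf(|K|): no subset of K of cardinality <= |I| is cofinal, i.e. the
   image of every map I -> K is bounded (strictly) in the initial ordinal K. *)
Definition card_lt_cf (I K : Type) : Prop :=
  exists Rel : K -> K -> Prop, initial_wellorder Rel /\
    forall f : I -> K, exists k, forall i, Rel (f i) k.

Definition pow_below (I K : Type) : Prop :=
  forall L : Type, card_lt L K -> card_lt (I -> L) K.

Definition ASQ_lt {R : realType} {V : Type} (Zs : set V) (add : V -> V -> V)
    (opp : V -> V) (nrm : V -> R) (K : Type) : Prop :=
  forall (A : set V), A `<=` [set z | Zs z /\ nrm z = 1] ->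
    card_lt {x : V | A x} K ->
    forall eps : R, 0 < eps ->
    exists y : V, [/\ Zs y, nrm y = 1 &
      forall x, A x -> nrm (add x y) <= 1 + eps /\ nrm (add x (opp y)) <= 1 + eps].

Section Linf.
Variables (R : realType) (I : Type) (X : I -> completeNormedModType R).

Definition linf_set : set (forall i, X i) :=
  [set x | exists M : R, forall i, `|x i| <= M].

Definition linf_norm (x : forall i, X i) : R := sup (range (fun i => `|x i|)).

Definition linf_add (x y : forall i, X i) : forall i, X i := fun i => x i + y i.
Definition linf_opp (x : forall i, X i) : forall i, X i := fun i => - x i.

Definition linf_ASQ_lt (K : Type) : Prop :=
  ASQ_lt linf_set linf_add linf_opp linf_norm K.
End Linf.

Definition condP {R : realType} {I : Type} (X : I -> completeNormedModType R)
    (K : Type) : Prop :=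
  forall eps : R, 0 < eps -> exists b : I,
    forall A : set (X b), A `<=` [set x | `|x| = 1] ->
      card_lt {x : X b | A x} K ->
      exists y : X b, `|y| = 1 /\ forall x, A x -> `|x + y| <= 1 + eps.

(* Sufficiency: let b be the index that (P) provides for eps, and y a unit
   vector of X_b with |u + y| <= 1 + eps for every normalised b-th coordinate u
   of an element of A and for its negative (fewer than kappa vectors, as kappa
   is infinite).  The ball of radius 1 + eps about -y is convex and contains 0,
   so it contains every x_b with |x_b| <= 1, and likewise for +y: the vector y
   placed at coordinate b is an ASQ witness for A.
   Necessity: if (P) fails for eps, each X_b carries a set A_b of fewer than
   kappa unit vectors for which no unit vector of X_b works.  As there are
   fewer than cf(kappa) indices, all |A_b| are bounded by one lambda < kappa,
   so the unit vectors of the sum with each coordinate in A_b or zero are at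
   most lambda^|I| < kappa many.  Their ASQ witness y for eps/2 has a coordinate
   y_b of norm close to 1; the vector of A_b that fails for y_b/|y_b|, placed
   at coordinate b, contradicts the choice of y. *)

From mathcomp Require Import all_boot all_order all_algebra.
From mathcomp Require Import all_classical all_reals all_analysis.
From mathcomp Require Import lra zify.
Set Implicit Arguments. Unset Strict Implicit. Unset Printing Implicit Defensive.
Import Order.TTheory GRing.Theory Num.Theory.
Import numFieldNormedType.Exports.
Local Open Scope classical_set_scope.
Local Open Scope ring_scope.
Local Open Scope card_scope.

Lemma card_le_setTP (T U : Type) : card_le T U <-> [set: T] #<= [set: U].
Proof.
split.
- case=> f finj; elim/Ppointed: U f finj => U f finj.
    by rewrite (_ : [set: T] = set0) ?card_ge0 // -subset0 => t; case: (no (f t)).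
  by apply/pcard_injP; exists f => x y _ _; apply: finj.
- elim/Ppointed: U => U.
    rewrite emptyE => /eqP T0.
    have nT (t : T) : False by have : [set: T] t by []; rewrite T0.
    by exists (fun t => False_rect _ (nT t)) => t; case: (nT t).
  by move/pcard_injP => [f finj]; exists f => x y; apply: finj; rewrite inE.
Qed.

Lemma sval_inj (T : Type) (P : T -> Prop) : injective (@sval T P).
Proof. by move=> u v; apply: eq_sig_hprop => x p q; apply: Prop_irrelevance. Qed.

Lemma card_le_lt_trans (A B K : Type) : card_le A B -> card_lt B K -> card_lt A K.
Proof.
move=> [f finj] [[g ginj] nKB]; split; first by exists (g \o f) => x y /ginj /finj.
by move=> [k kinj]; apply: nKB; exists (f \o k) => x y /finj /kinj.
Qed.

Lemma card_le_subset (T : Type) (A B : set T) : A `<=` B -> card_le {x | A x} {x | B x}.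
Proof.
move=> AB; exists (fun x => exist _ (sval x) (AB _ (svalP x))) => x y.
by case=> /sval_inj.
Qed.

Lemma card_le_sub_range (T U : Type) (f : T -> U) (B : set U) :
  B `<=` range f -> card_le {u | B u} T.
Proof.
move=> Bf; pose g u := s2val (cid2 (Bf _ (svalP u))).
have fg u : f (g u) = sval u by rewrite /g; case: cid2.
by exists g => u v guv; apply: sval_inj; rewrite -fg guv fg.
Qed.

Lemma card_lt_finite (A K : Type) :
  infinite_type K -> finite_set [set: A] -> card_lt A K.
Proof.
move=> iK fA; split.
  apply/card_le_setTP; have [n An] := iffLR (finite_set_leP _) fA.
  apply: (card_le_trans An); apply: card_le_trans (subset_card_le (subsetT _)) _.
  exact: iffLR (infiniteP _) iK.
by move/card_le_setTP => KA; apply: iK; apply: card_le_finite KA fA.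
Qed.

Lemma infinite_set_inj_seq (T : Type) (S : set T) :
  infinite_set S -> exists e : nat -> T, injective e /\ forall n, S (e n).
Proof.
elim/Ppointed: T S => T S.
  move=> iS; exfalso; apply: iS.
  by rewrite (_ : S = set0) ?finite_set0 // -subset0 => t; case: (no t).
move=> /infiniteP /pcard_leP /injfunPex [e eS einj].
by exists e; split=> [x y|n]; [apply: einj; rewrite inE | apply: eS].
Qed.

Section BoolProdInfinite.
Variable T : Type.

(* [G] is the graph of an injection from [bool * D] into [D], where [D] is
   [doubling_dom G]. *)
Definition doubling_graph (G : set (bool * T * T)) : Prop := [/\
  forall p s s', G (p, s) -> G (p, s') -> s = s',
  forall p p' s, G (p, s) -> G (p', s) -> p = p',
  forall b t s b', G ((b, t), s) -> exists s', G ((b', t), s') &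
  forall p s, G (p, s) -> exists s', G ((true, s), s')].

Definition doubling_dom (G : set (bool * T * T)) : set T :=
  [set t | exists s, G ((true, t), s)].

Lemma doubling_graph_dom G b t s : doubling_graph G -> G ((b, t), s) ->
  doubling_dom G t /\ doubling_dom G s.
Proof.
by case=> _ _ Gdom Gran Gbts; split; [apply: Gdom _ _ _ true Gbts | apply: Gran _ _ Gbts].
Qed.

Lemma doubling_graph_bigcup (F : set (set (bool * T * T))) :
  F `<=` doubling_graph -> total_on F subset -> doubling_graph (\bigcup_(G in F) G).
Proof.
move=> Fd Ftot.
have common G1 G2 : F G1 -> F G2 ->
    exists G, [/\ doubling_graph G, G1 `<=` G & G2 `<=` G].
  by move=> FG1 FG2; case: (Ftot _ _ FG1 FG2) => le12;
    [exists G2; split => //; apply: Fd | exists G1; split => //; apply: Fd].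
split.
- move=> p s s' [G1 FG1 G1s] [G2 FG2 G2s'].
  have [G [[Gf _ _ _] le1 le2]] := common _ _ FG1 FG2.
  exact: Gf (le1 _ G1s) (le2 _ G2s').
- move=> p p' s [G1 FG1 G1s] [G2 FG2 G2s].
  have [G [[_ Gi _ _] le1 le2]] := common _ _ FG1 FG2.
  exact: Gi (le1 _ G1s) (le2 _ G2s).
- move=> b t s b' [G FG Gs]; have [_ _ Gdom _] := Fd _ FG.
  by have [s' Gs'] := Gdom _ _ _ b' Gs; exists s', G.
- move=> p s [G FG Gs]; have [_ _ _ Gran] := Fd _ FG.
  by have [s' Gs'] := Gran _ _ Gs; exists s', G.
Qed.

Lemma doubling_graph_setU G1 G2 : doubling_graph G1 -> doubling_graph G2 ->
  doubling_dom G1 `&` doubling_dom G2 = set0 -> doubling_graph (G1 `|` G2).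
Proof.
move=> G1d G2d disj.
have apart t : doubling_dom G1 t -> doubling_dom G2 t -> False.
  by move=> D1 D2; have : set0 t by rewrite -disj.
have [f1 i1 d1 r1] := G1d; have [f2 i2 d2 r2] := G2d.
have dom1 b t s := @doubling_graph_dom G1 b t s G1d.
have dom2 b t s := @doubling_graph_dom G2 b t s G2d.
split.
- move=> [b t] s s' [G1s|G2s] [G1s'|G2s']; [exact: f1 G1s G1s' | | | exact: f2 G2s G2s'].
  + by case: (apart t); [case: (dom1 _ _ _ G1s) | case: (dom2 _ _ _ G2s')].
  + by case: (apart t); [case: (dom1 _ _ _ G1s') | case: (dom2 _ _ _ G2s)].
- move=> [b t] [b' t'] s [G1s|G2s] [G1s'|G2s'];
    [exact: i1 G1s G1s' | | | exact: i2 G2s G2s'].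
  + by case: (apart s); [case: (dom1 _ _ _ G1s) | case: (dom2 _ _ _ G2s')].
  + by case: (apart s); [case: (dom1 _ _ _ G1s') | case: (dom2 _ _ _ G2s)].
- move=> b t s b' [Gs|Gs].
  + by have [s' ?] := d1 _ _ _ b' Gs; exists s'; left.
  + by have [s' ?] := d2 _ _ _ b' Gs; exists s'; right.
- move=> p s [Gs|Gs].
  + by have [s' ?] := r1 _ _ Gs; exists s'; left.
  + by have [s' ?] := r2 _ _ Gs; exists s'; right.
Qed.

Definition seq_doubling (e : nat -> T) : set (bool * T * T) :=
  [set q | exists n (b : bool), q = ((b, e n), e (2 * n + b)%N)].

Lemma doubling_graph_seq (e : nat -> T) : injective e -> doubling_graph (seq_doubling e).
Proof.
move=> einj; split.
- by move=> _ _ _ [n [b [-> ->]]] [n' [b' [<- /einj <- ->]]].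
- move=> _ _ _ [n [b [-> ->]]] [n' [b' [-> /einj nb]]].
  by have [-> ->] : n = n' /\ b = b' by case: b b' nb => [] []; lia.
- by move=> b0 t s b' [n [b [_ -> _]]]; exists (e (2 * n + b')%N), n, b'.
- move=> p s [n [b [_ ->]]].
  by exists (e (2 * (2 * n + b) + true)%N), (2 * n + b)%N, true.
Qed.

Lemma maximal_doubling_graph_cofinite G : doubling_graph G ->
  (forall G', G `<` G' -> ~ doubling_graph G') -> finite_set (~` doubling_dom G).
Proof.
move=> Gd Gmax; apply: contrapT => /infinite_set_inj_seq [e [einj eD]].
apply: (Gmax (G `|` seq_doubling e)).
  split; first exact: subsetUl.
  move=> /(_ ((true, e 0%N), e 1%N)) sub; apply: (eD 0%N); exists (e 1%N).
  by apply: sub; right; exists 0%N, true.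
apply: doubling_graph_setU => //; first exact: doubling_graph_seq.
by rewrite -subset0 => t [Dt [s [n [b [bE tE _]]]]]; apply: (eD n); rewrite -tE.
Qed.

Lemma doubling_graph_inj G : doubling_graph G -> exists g : bool * T -> T,
  forall p p', doubling_dom G p.2 -> doubling_dom G p'.2 -> g p = g p' -> p = p'.
Proof.
case=> _ Gi Gdom _.
have [g gG] : {g : bool * T -> T & forall p, doubling_dom G p.2 -> G (p, g p)}.
  apply: (@choice _ _ (fun p s => doubling_dom G p.2 -> G (p, s))) => -[b t].
  have [[s Gs]|nD] := pselect (doubling_dom G t); last by exists t.
  by have [s' ?] := Gdom _ _ _ b Gs; exists s'.
by exists g => p p' Dp Dp' E; apply: (Gi _ _ (g p)); [exact: gG | rewrite E; exact: gG].
Qed.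

(* Points outside [D] are sent to the even terms of a sequence [e] in [D],
   and the sequence itself is shifted to its odd terms. *)
Lemma cofinite_inj (D : set T) : infinite_set D -> finite_set (~` D) ->
  exists phi : T -> T, injective phi /\ forall t, D (phi t).
Proof.
move=> iD fD; have [e [einj eD]] := infinite_set_inj_seq iD.
have /pcard_injP [c cinj] : ~` D #<= [set: nat] := finite_set_countable fD.
pose phi t := if pselect (D t) is left _ then
    if pselect (exists n, t = e n) is left H then e (2 * projT1 (cid H)).+1 else t
  else e (2 * c t)%N.
exists phi; split; last first.
  move=> t; rewrite /phi; case: pselect => [Dt|_]; last exact: eD.
  by case: pselect => // _; exact: eD.
move=> t t'; rewrite /phi.
case: (pselect (D t)) => Dt; case: (pselect (D t')) => Dt'.
- case: pselect => [[n tn]|tNe]; case: pselect => [[n' tn']|t'Ne] //.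
  + case: cid => m /= -> /einj; case: cid => m' /= -> /eqP.
    by rewrite eqSS eqn_pmul2l // => /eqP ->.
  + by case: cid => m /= -> tE; case: t'Ne; exists (2 * m).+1.
  + by case: cid => m /= -> tE; case: tNe; exists (2 * m).+1.
- case: pselect => [H|tNe]; first by case: cid => m /= _ /einj; lia.
  by move=> tE; case: tNe; exists (2 * c t')%N.
- case: pselect => [H|tNe]; first by case: cid => m /= _ /einj; lia.
  by move=> tE; case: tNe; exists (2 * c t)%N.
- by move/einj/eqP; rewrite eqn_pmul2l // => /eqP; apply: cinj; rewrite inE.
Qed.

Lemma infinite_card_le_bool_prod : infinite_set [set: T] -> card_le (bool * T) T.
Proof.
move=> iT; have [G [Gd Gmax]] := Zorn_bigcup doubling_graph_bigcup.
have cofD := maximal_doubling_graph_cofinite Gd Gmax.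
have iD : infinite_set (doubling_dom G).
  by move=> fD; apply: iT; rewrite -(setUv (doubling_dom G)) finite_setU.
have [phi [phiI phiD]] := cofinite_inj iD cofD.
have [g gI] := doubling_graph_inj Gd.
exists (fun p => g (p.1, phi p.2)) => -[b t] [b' t'].
by move/(gI (b, phi t) (b', phi t') (phiD t) (phiD t')) => [-> /phiI ->].
Qed.

End BoolProdInfinite.

Lemma card_lt_bool_prod (A K : Type) :
  infinite_type K -> card_lt A K -> card_lt (bool * A) K.
Proof.
move=> iK AK; have [fA|iA] := pselect (finite_set [set: A]).
  apply: card_lt_finite; rewrite // -setXTT.
  by apply: finite_setX => //; exact: finite_finset.
exact: card_le_lt_trans (infinite_card_le_bool_prod iA) AK.
Qed.

(* Otherwise transfinite recursion along [Rel] builds an injection [K -> A]: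
   at each [k] the values already chosen do not exhaust [A]. *)
Lemma card_le_initial_segment (K A : Type) (Rel : K -> K -> Prop) :
  (forall i j, [\/ Rel i j, i = j | Rel j i]) -> well_founded Rel ->
  ~ card_le K A -> exists k, card_le A {j | Rel j k}.
Proof.
move=> tot wf nKA; apply: contrapT => small.
have fresh k (r : forall j, Rel j k -> A) :
    exists a, forall j (jk : Rel j k), r j jk <> a.
  apply: contrapT => nfresh; apply: small; exists k.
  have hit a : exists p : {j | Rel j k}, r (sval p) (proj2_sig p) = a.
    apply: contrapT => nhit; apply: nfresh; exists a => j jk rja.
    by apply: nhit; exists (exist _ j jk); exact: rja.
  exists (fun a => projT1 (cid (hit a))) => a a' E.
  by rewrite -(projT2 (cid (hit a))) -(projT2 (cid (hit a'))) E.
pose F k r := projT1 (cid (fresh k r)).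
pose h := Fix wf (fun _ => A) F.
have hE k : h k = F k (fun j _ => h j).
  apply: Fix_eq => k' f g fg; congr F.
  by apply: functional_extensionality_dep => j; apply: functional_extensionality_dep.
have hne j k : Rel j k -> h j <> h k.
  by move=> jk; rewrite (hE k); apply: (projT2 (cid (fresh k _))).
apply: nKA; exists h => j k E.
by case: (tot j k) => [jk| // |kj]; [case: (hne _ _ jk) | case: (hne _ _ kj)].
Qed.

Lemma card_le_setU1_segment (K T : Type) (Rel : K -> K -> Prop) (S : set T) (z : T)
    (k k' : K) :
  ~ Rel k k -> Rel k k' -> (forall j, Rel j k -> Rel j k') ->
  card_le {x | S x} {j | Rel j k} -> card_le {x | S x \/ x = z} {j | Rel j k'}.
Proof.
move=> kk kk' below [f finj].
pose g (x : {x | S x \/ x = z}) : {j | Rel j k'} :=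
  if pselect (S (sval x)) is left Sx
  then exist _ _ (below _ (svalP (f (exist _ _ Sx)))) else exist _ k kk'.
exists g => -[x Hx] [y Hy]; rewrite /g /=.
case: pselect => Sx; case: pselect => Sy /(congr1 sval) /= E.
- by apply: sval_inj; have /(congr1 sval) := finj _ _ (sval_inj E).
- by case: kk; rewrite -{1}E; exact: (svalP (f (exist _ x Sx))).
- by case: kk; rewrite {1}E; exact: (svalP (f (exist _ y Sy))).
- by apply: sval_inj => /=; case: Hx => // ->; case: Hy.
Qed.

Lemma card_le_dfun (I L : Type) (T : I -> Type) (S : forall i, set (T i)) :
  (forall i, card_le {x | S i x} L) ->
  card_le {x : forall i, T i | forall i, S i (x i)} (I -> L).
Proof.
move=> SL; pose f i := projT1 (cid (SL i)).
exists (fun (x : {x : forall i, T i | forall i, S i (x i)}) i =>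
  f i (exist _ (sval x i) (proj2_sig x i))) => x y E.
apply: sval_inj; apply: functional_extensionality_dep => i.
by have /(congr1 sval) := projT2 (cid (SL i)) _ _ (congr1 (fun g => g i) E).
Qed.

Lemma card_lt_dfun (I K : Type) (T : I -> Type) (S : forall i, set (T i))
    (z : forall i, T i) :
  card_lt_cf I K -> pow_below I K -> (forall i, card_lt {x | S i x} K) ->
  card_lt {x : forall i, T i | forall i, S i (x i) \/ x i = z i} K.
Proof.
case=> Rel [[irr trans tot wf seg] bounded] pow SK.
have [k Sk] : {k : I -> K & forall i, card_le {x | S i x} {j | Rel j (k i)}}.
  apply: (@choice _ _ (fun i k => card_le {x | S i x} {j | Rel j k})) => i.
  by apply: card_le_initial_segment => //; case: (SK i).
have [k' kk'] := bounded k.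
apply: (card_le_lt_trans _ (pow _ (seg k'))).
apply: (card_le_dfun (S := fun i x => S i x \/ x = z i)) => i.
by apply: card_le_setU1_segment (Sk i) => // j /trans; apply.
Qed.

Section Normalized.
Variables (R : realType) (V : normedModType R).

Definition normalized (v : V) : V := `|v|^-1 *: v.

Lemma normalizedN (v : V) : normalized (- v) = - normalized v.
Proof. by rewrite /normalized normrN scalerN. Qed.

Lemma norm_normalized (v : V) : v != 0 -> `|normalized v| = 1.
Proof. by move=> v0; rewrite normrZ normfV normr_id mulVf ?normr_eq0. Qed.

Lemma normalizedK (v : V) : `|v| *: normalized v = v.
Proof.
have [->|v0] := eqVneq v 0; first by rewrite normr0 scale0r.
by rewrite scalerA mulfV ?normr_eq0 // scale1r.
Qed.

Lemma norm_normalizedB (v : V) : v != 0 -> `|normalized v - v| = `|1 - `|v| |.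
Proof.
move=> v0; have nv : 0 < `|v| by rewrite normr_gt0.
have -> : normalized v - v = (`|v|^-1 - 1) *: v by rewrite scalerBl scale1r.
rewrite normrZ -{2}(ger0_norm (ltW nv)) -normrM.
by rewrite mulrBl mulVf ?mul1r // gt_eqF.
Qed.

Lemma ler_norm_scaleD (w y : V) (t c : R) : 0 <= t <= 1 ->
  `|y| <= c -> `|w + y| <= c -> `|t *: w + y| <= c.
Proof.
move=> /andP[t0 t1] yc wyc.
have -> : t *: w + y = t *: (w + y) + (1 - t) *: y.
  by rewrite scalerDr scalerBl scale1r -addrA [t *: y + _]addrC subrK.
apply: le_trans (ler_normD _ _) _; rewrite !normrZ ger0_norm ?ger0_norm ?subr_ge0 //.
have : t * `|w + y| <= t * c by apply: ler_wpM2l.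
have : (1 - t) * `|y| <= (1 - t) * c by apply: ler_wpM2l; rewrite ?subr_ge0.
lra.
Qed.

(* The ball of radius [c] around [- y] is convex and contains [0]. *)
Lemma ler_normD_normalized (v y : V) (c : R) : `|v| <= 1 -> `|y| <= c ->
  `|normalized v + y| <= c -> `|v + y| <= c.
Proof.
move=> v1 yc vyc; rewrite -{1}(normalizedK v).
by apply: ler_norm_scaleD; rewrite ?normr_ge0.
Qed.

End Normalized.

Section Linf.
Variables (R : realType) (I : Type) (X : I -> completeNormedModType R).
Implicit Types (x y : forall i, X i).

Lemma linf_coord_le x i : linf_set x -> `|x i| <= linf_norm x.
Proof.
move=> [M HM]; apply: ub_le_sup; last by exists i.
by exists M => _ [j _ <-]; exact: HM.
Qed.

Lemma linf_norm_le x (b : I) (c : R) : (forall i, `|x i| <= c) -> linf_norm x <= c.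
Proof. by move=> xc; apply: ge_sup; [exists `|x b|, b | move=> _ [j _ <-]]. Qed.

Lemma linf_set_add x y : linf_set x -> linf_set y -> linf_set (linf_add x y).
Proof.
move=> [M xM] [N yN]; exists (M + N) => i.
by apply: le_trans (ler_normD _ _) _; apply: lerD.
Qed.

Lemma linf_norm_adherent x (d : R) : linf_set x -> linf_norm x != 0 -> 0 < d ->
  exists i, linf_norm x - d < `|x i|.
Proof.
move=> [M xM] x0 d0; have [[i0 _]|nI] := pselect (exists i : I, True); last first.
  move: x0; rewrite /linf_norm (_ : range (fun i => `|x i|) = set0) ?sup0 ?eqxx //.
  by rewrite -subset0 => r [i _ _]; case: nI; exists i.
have [_ [i _ <-] xi] : exists2 e, range (fun i => `|x i|) e & linf_norm x - d < e.
  by apply: sup_adherent d0 _; split; [exists `|x i0|, i0 | exists M => _ [j _ <-]].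
by exists i.
Qed.

Definition linf_single (b : I) (v : X b) : forall i, X i := fun i =>
  if pselect (b = i) is left e then eq_rect b X v i e else 0.

Lemma linf_single_id (b : I) (v : X b) : linf_single v b = v.
Proof.
by rewrite /linf_single; case: pselect => // e; rewrite (Prop_irrelevance e erefl).
Qed.

Lemma linf_single_neq (b i : I) (v : X b) : b <> i -> linf_single v i = 0.
Proof. by rewrite /linf_single; case: pselect. Qed.

Lemma linf_opp_single (b : I) (v : X b) :
  linf_opp (linf_single v) = linf_single (- v).
Proof.
apply: functional_extensionality_dep => i; rewrite /linf_opp.
by have [<-|bi] := pselect (b = i); rewrite ?linf_single_id ?linf_single_neq ?oppr0.
Qed.

Lemma linf_single_set (b : I) (v : X b) : linf_set (linf_single v).
Proof.
exists `|v| => i; have [<-|bi] := pselect (b = i); first by rewrite linf_single_id.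
by rewrite linf_single_neq // normr0.
Qed.

Lemma linf_norm_single (b : I) (v : X b) : linf_norm (linf_single v) = `|v|.
Proof.
apply/eqP; rewrite eq_le; apply/andP; split.
  apply: (linf_norm_le b) => i.
  have [<-|bi] := pselect (b = i); first by rewrite linf_single_id.
  by rewrite linf_single_neq // normr0.
by rewrite -{1}(linf_single_id v); apply/linf_coord_le/linf_single_set.
Qed.

Lemma linf_norm_add_single x (b : I) (v : X b) (c : R) :
  (forall i, `|x i| <= c) -> `|x b + v| <= c ->
  linf_norm (linf_add x (linf_single v)) <= c.
Proof.
move=> xc xvc; apply: (linf_norm_le b) => i; rewrite /linf_add.
by have [<-|bi] := pselect (b = i); rewrite ?linf_single_id ?linf_single_neq ?addr0.
Qed.

End Linf.

Lemma condP_linf_ASQ (R : realType) (I : Type) (X : I -> completeNormedModType R)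
    (K : Type) :
  infinite_type K -> condP X K -> linf_ASQ_lt X K.
Proof.
move=> iK HP A Asph Acard eps eps0.
have [b Pb] := HP eps eps0.
pose B := [set v : X b | `|v| = 1 /\
  exists2 x, A x & v = normalized (x b) \/ v = - normalized (x b)].
pose f (p : bool * {x | A x}) := (if p.1 then 1 else -1) *: normalized (sval p.2 b).
have Bf : B `<=` range f.
  move=> v [_ [x Ax [->|->]]].
    by exists (true, exist _ x Ax); rewrite // /f /= scale1r.
  by exists (false, exist _ x Ax); rewrite // /f /= scaleN1r.
have Bcard := card_le_lt_trans (card_le_sub_range Bf) (card_lt_bool_prod iK Acard).
have [y [y1 By]] := Pb B (fun v => @proj1 _ _) Bcard.
have yeps : `|y| <= 1 + eps by rewrite y1 lerDl ltW.
have Ay x : A x -> `|x b + y| <= 1 + eps /\ `|x b - y| <= 1 + eps.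
  move=> Ax; have [xs x1] := Asph _ Ax.
  have xb1 : `|x b| <= 1 by rewrite -x1; apply: linf_coord_le.
  have [->|xb0] := eqVneq (x b) 0; first by rewrite add0r sub0r normrN.
  split.
    apply: ler_normD_normalized => //; apply: By.
    by split; [exact: norm_normalized | exists x => //; left].
  rewrite -normrN opprB addrC; apply: ler_normD_normalized; rewrite ?normrN //.
  apply: By; rewrite normalizedN.
  by split; [rewrite normrN norm_normalized | exists x => //; right].
exists (linf_single y); split; [exact: linf_single_set | by rewrite linf_norm_single |].
move=> x Ax; have [[M xM] x1] := Asph _ Ax.
have xi i : `|x i| <= 1 + eps.
  apply: (@le_trans _ _ 1); last by rewrite lerDl ltW.
  by rewrite -x1; apply: linf_coord_le; exists M.
by rewrite linf_opp_single; split; apply: linf_norm_add_single => //; case: (Ay _ Ax).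
Qed.

Lemma not_condP (R : realType) (I : Type) (X : I -> completeNormedModType R)
    (K : Type) :
  ~ condP X K -> exists2 eps : R, 0 < eps & forall b, exists A : set (X b),
    [/\ A `<=` [set x | `|x| = 1], card_lt {x | A x} K &
        forall y, `|y| = 1 -> exists2 x, A x & 1 + eps < `|x + y|].
Proof.
move=> nP; apply: contrapT => H; apply: nP => eps eps0.
apply: contrapT => nb; apply: H; exists eps => // b.
apply: contrapT => nA; apply: nb; exists b => A Asph Acard.
apply: contrapT => ny; apply: nA; exists A; split => // y y1.
apply: contrapT => nx; apply: ny; exists y; split => // x Ax.
by rewrite leNgt; apply/negP => lt; apply: nx; exists x.
Qed.

Lemma linf_ASQ_condP (R : realType) (I : Type) (X : I -> completeNormedModType R)
    (K : Type) :
  card_lt_cf I K -> pow_below I K -> linf_ASQ_lt X K -> condP X K.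
Proof.
move=> cf pow asq; apply: contrapT => /not_condP [eps eps0 bad].
pose A b := projT1 (cid (bad b)).
have [Asph Acard Abad] : [/\ forall b, A b `<=` [set x | `|x| = 1],
    forall b, card_lt {x | A b x} K &
    forall b y, `|y| = 1 -> exists2 x, A b x & 1 + eps < `|x + y|].
  by split=> b; case: (projT2 (cid (bad b))).
pose Z := [set x : forall i, X i |
  [/\ linf_set x, linf_norm x = 1 & forall i, A i (x i) \/ x i = 0]].
have Zcard : card_lt {x | Z x} K.
  apply: card_le_lt_trans (card_lt_dfun (fun i => 0) cf pow Acard).
  by apply: card_le_subset => x [].
have eps2 : 0 < eps / 2 by lra.
have [y [ybd y1 Zy]] := asq Z (fun x '(And3 xbd x1 _) => conj xbd x1) Zcard _ eps2.
pose d := Num.min (eps / 2) 1.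
have [i yi] : exists i, 1 - d < `|y i|.
  by rewrite -y1; apply: linf_norm_adherent; rewrite ?y1 ?oner_neq0 // lt_min eps2 ltr01.
have d1 : d <= 1 by rewrite ge_min lexx orbT.
have yi0 : y i != 0 by rewrite -normr_gt0; apply: le_lt_trans yi; rewrite subr_ge0.
have yi1 : `|y i| <= 1 by rewrite -y1; apply: linf_coord_le.
have [x Ax xbad] := Abad i _ (norm_normalized yi0).
have Zx : Z (linf_single x).
  split; [exact: linf_single_set | by rewrite linf_norm_single Asph |].
  move=> j; have [<-|ij] := pselect (i = j); first by left; rewrite linf_single_id.
  by right; rewrite linf_single_neq.
have := linf_coord_le i (linf_set_add (linf_single_set x) ybd).
rewrite /linf_add linf_single_id => /le_trans /(_ (Zy _ Zx).1) xy.
have := ler_normD (x + y i) (normalized (y i) - y i).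
rewrite norm_normalizedB // [normalized _ - _]addrC addrA addrK ger0_norm ?subr_ge0 //.
have : d <= eps / 2 by rewrite ge_min lexx.
lra.
Qed.

Theorem theorem4p1 (R : realType) (I : Type) (X : I -> completeNormedModType R)
  (K : Type) (hK : infinite_type K) :
  (condP X K -> linf_ASQ_lt X K) /\
  (card_lt_cf I K -> pow_below I K -> linf_ASQ_lt X K -> condP X K).
Proof. by split; [exact: condP_linf_ASQ | exact: linf_ASQ_condP]. Qed.
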